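(* Fix $n\in\mathbb Z_{\ge2}$ and $k\in\mathbb Z_{\ge1}$. Let $\sigma\in\mathrm{Av}(\searrow_n)$ with $|\sigma|\ge k$ be such that $\mathbb C(\sigma)$ is a rainbow $(n-1)$-colouring, i.e. its image is exactly $[n-1]$, and let $(\pi,\mathfrak c)=\mathrm{en}_k(\mathbb S(\sigma))$, an edge of $\mathcal{O}v_c(k,\searrow_n)$. Let $(\pi',\mathfrak c')$ be an edge of $\mathcal{O}v_c(k,\searrow_n)$ whose start vertex equals the arrival vertex of $(\pi,\mathfrak c)$, i.e. $\mathrm{be}_{k-1}(\pi',\mathfrak c')=\mathrm{en}_{k-1}(\pi,\mathfrak c)$. Then there exists $\iota\in[|\sigma|+1]$ such that $\mathrm{en}_k(\mathbb S(\sigma^{*\iota}))=(\pi',\mathfrak c')$.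
   Context: $\searrow_n=n(n-1)\cdots1$. For $I=\{i_1<\dots<i_j\}$, $\mathrm{pat}_I(\sigma)$ is the unique permutation with entries in the same relative order as $\sigma(i_1),\dots,\sigma(i_j)$; $\mathrm{Av}_m(\searrow_n)$ is the set of size-$m$ permutations with no $I$ such that $\mathrm{pat}_I(\sigma)=\searrow_n$, $\mathrm{Av}(\searrow_n)$ their union over $m\ge1$. For $\sigma\in\mathcal S_m$ and $\iota\in[m+1]$, $\sigma^{*\iota}$ is the permutation of $[m+1]$ with entries in the same relative order as $\sigma(1),\dots,\sigma(m),\iota-1/2$. A colouring of $\sigma\in\mathcal S_m$ is a map $\mathfrak c:[m]\to\mathbb Z_{\ge1}$; restriction $\mathrm{pat}_I(\sigma,\mathfrak c)=(\mathrm{pat}_I(\sigma),\mathfrak c')$ with $\mathfrak c'(\ell)=\mathfrak c(i_\ell)$; $\mathrm{be}_j=\mathrm{pat}_{\{1,\dots,j\}}$, $\mathrm{en}_j=\mathrm{pat}_{\{m-j+1,\dots,m\}}$. The RITMO colouring $\mathbb C(\sigma)$ processes indices in decreasing order of value, giving index $i$ the smallest positive integer $c$ such that no already coloured index $j<i$ has colour $c$ (equivalently: colour 1 on left-to-right maxima, colour 2 on left-to-right maxima of the remaining entries, etc.); $\mathbb S(\sigma)=(\sigma,\mathbb C(\sigma))$. A coloured permutation $(\pi,\mathfrak c)$ with $\pi\in\mathrm{Av}_k(\searrow_n)$ is inherited if there is $\sigma\in\mathrm{Av}(\searrow_n)$ with $|\sigma|\ge k$ and $\mathrm{en}_k(\mathbb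 S(\sigma))=(\pi,\mathfrak c)$; $\mathcal C_{n-1}(k)$ is the set of these. The coloured overlap graph $\mathcal{O}v_c(k,\searrow_n)$ has vertex set $\mathcal C_{n-1}(k-1)$, edge set $\mathcal C_{n-1}(k)$, the edge $(\pi,\mathfrak c)$ going from $\mathrm{be}_{k-1}(\pi,\mathfrak c)$ to $\mathrm{en}_{k-1}(\pi,\mathfrak c)$. *)

(* Permutations of [m] are represented as sequences
   [sigma(1); ...; sigma(m)] of naturals; colourings as sequences of naturals
   [c(1); ...; c(m)] of the same length. *)
From mathcomp Require Import all_boot.
Set Implicit Arguments. Unset Strict Implicit. Unset Printing Implicit Defensive.

Definition is_perm (s : seq nat) : bool := perm_eq s (iota 1 (size s)).

Definition std (s : seq nat) : seq nat :=
  [seq (count (fun y => y < x) s).+1 | x <- s].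

Definition decr (n : nat) : seq nat := rev (iota 1 n).

Definition pat (I : bitseq) (s : seq nat) : seq nat := std (mask I s).

Definition avoids (n : nat) (s : seq nat) : Prop :=
  forall I : bitseq, pat I s <> decr n.

Definition inAv (n : nat) (s : seq nat) : Prop :=
  [/\ is_perm s, 1 <= size s & avoids n s].

Definition inAv_m (m n : nat) (s : seq nat) : Prop :=
  [/\ is_perm s, size s = m & avoids n s].

(* sigma^{* iota}: relative order of sigma(1),...,sigma(m), iota - 1/2
   (values doubled to stay in nat: 2 sigma(i) versus 2 iota - 1) *)
Definition star (s : seq nat) (i : nat) : seq nat :=
  std (rcons [seq 2 * x | x <- s] (2 * i).-1).

Definition mex1 (l : seq nat) : nat :=
  nth 0 [seq c <- iota 1 (size l).+1 | c \notin l] 0.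

(* one step of the RITMO colouring: colour the index (0-based) holding value v,
   st is the current colouring (0 = not yet coloured) *)
Definition ritmo_step (s : seq nat) (st : seq nat) (v : nat) : seq nat :=
  let i := index v s in
  let used := [seq c <- take i st | 0 < c] in
  set_nth 0 st i (mex1 used).

Definition ritmo (s : seq nat) : seq nat :=
  foldl (ritmo_step s) (nseq (size s) 0) (rev (iota 1 (size s))).

Definition cperm := (seq nat * seq nat)%type.

Definition Sfun (s : seq nat) : cperm := (s, ritmo s).

Definition be (j : nat) (p : cperm) : cperm := (std (take j p.1), take j p.2).
Definition en (j : nat) (p : cperm) : cperm :=
  (std (drop (size p.1 - j) p.1), drop (size p.1 - j) p.2).

(* C_{n-1}(k): inherited coloured permutations = edges of Ov_c(k, decr n) *)
Definition inherited (n k : nat) (p : cperm) : Prop :=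
  inAv_m k n p.1 /\
  exists s, [/\ inAv n s, k <= size s & en k (Sfun s) = p].

Definition edge (k n : nat) (p : cperm) : Prop := inherited n k p.

Definition start_vertex (k : nat) (p : cperm) : cperm := be k.-1 p.
Definition arrival_vertex (k : nat) (p : cperm) : cperm := en k.-1 p.

Definition rainbow (n : nat) (c : seq nat) : Prop :=
  forall x, x \in c <-> 1 <= x <= n - 1.

From mathcomp Require Import all_boot zify.
Set Implicit Arguments. Unset Strict Implicit. Unset Printing Implicit Defensive.

(* The RITMO colouring is the greedy colouring in which the entry at position i
   receives one more than the largest colour of an earlier, larger entry
   ([colour], [ritmo_colour]).  Colours are thus determined by the relative
   order of a prefix, they are at most n-1 in a permutation avoiding
   n(n-1)...1 ([colour_le_of_avoids]), and appending a value v - 1/2 to sigma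
   leaves the old colours untouched and gives the new entry the colour
   1 + [colour_above sigma v], the largest colour of an entry of value >= v.

   Given the edge (pi', c') = en_k(S(t)) starting where en_k(S(sigma)) arrives,
   the last k-1 entries of sigma and the k-1 entries of t before its last
   entry y agree in order and colours ([overlap_window]).  As v decreases,
   [colour_above sigma v] increases by steps of at most one; the admissible
   positions of v - 1/2 relative to the window form an interval on which this
   function passes through colour(y) - 1 ([threshold_exists]): at the bottom
   it is large enough by the rainbow hypothesis, at the top small enough by
   the colours of t.  The resulting sigma^{*v} then ends like t in order
   ([star_suffix_order_iso]) and in colours ([star_suffix_colours]). *)

Definition order_iso (x y : seq nat) : Prop :=
  size x = size y /\ forall i j, i < size x -> j < size x ->
    (nth 0 x i < nth 0 x j) = (nth 0 y i < nth 0 y j).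

Lemma order_iso_sym x y : order_iso x y -> order_iso y x.
Proof. by move=> [E H]; split=> // i j; rewrite -E => *; rewrite H. Qed.

Lemma order_iso_trans x y z : order_iso x y -> order_iso y z -> order_iso x z.
Proof.
move=> [Exy Hxy] [Eyz Hyz]; split=> [|i j Hi Hj]; first by rewrite Exy.
by rewrite Hxy // Hyz // -Exy.
Qed.

Lemma order_iso_take t x y : order_iso x y -> order_iso (take t x) (take t y).
Proof.
move=> [E H]; split=> [|i j]; first by rewrite !size_take E.
rewrite size_take => Hi Hj.
have [Hit Hjt] : i < t /\ j < t by move: Hi Hj; case: ifP; lia.
by rewrite !nth_take //; apply: H; move: Hi Hj; case: ifP; lia.
Qed.

Lemma order_iso_drop t x y : order_iso x y -> order_iso (drop t x) (drop t y).
Proof.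
move=> [E H]; split=> [|i j]; first by rewrite !size_drop E.
by rewrite size_drop => Hi Hj; rewrite !nth_drop; apply: H; lia.
Qed.

Lemma order_iso_double x : order_iso [seq 2 * a | a <- x] x.
Proof.
split=> [|i j]; first by rewrite size_map.
by rewrite size_map => Hi Hj; rewrite !(nth_map 0) // ltn_mul2l.
Qed.

Lemma order_iso_rcons x y a b : order_iso x y ->
  (forall i, i < size x ->
     (nth 0 x i < a) = (nth 0 y i < b) /\ (a < nth 0 x i) = (b < nth 0 y i)) ->
  order_iso (rcons x a) (rcons y b).
Proof.
move=> [E H] Hab; split=> [|i j]; first by rewrite !size_rcons E.
rewrite size_rcons !nth_rcons -E !ltnS => Hi Hj.
have [Hi'|Hi'] := ltnP i (size x); have [Hj'|Hj'] := ltnP j (size x).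
- exact: H.
- have -> : j = size x by lia.
  by rewrite eqxx; case: (Hab i Hi').
- have -> : i = size x by lia.
  by rewrite eqxx; case: (Hab j Hj').
- have -> : i = size x by lia.
  have -> : j = size x by lia.
  by rewrite eqxx !ltnn.
Qed.

Lemma count_lt_rank (x : seq nat) a b : a \in x ->
  (count (fun y => y < a) x < count (fun y => y < b) x) = (a < b).
Proof.
move=> ax; case: (ltnP a b) => Hab; last first.
  by apply/negbTE; rewrite -leqNgt; apply: sub_count => y /=; lia.
have Ha : 0 < count (pred1 a) x by rewrite -has_count; apply/hasP; exists a => /=.
suff : count (fun y => y < a) x + count (pred1 a) x <= count (fun y => y < b) x
  by lia.
elim: {ax Ha} x => //= y x IH.
by case: (ltngtP y a) => H /=; try (case: eqP => /= E); lia.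
Qed.

Lemma size_std x : size (std x) = size x. Proof. exact: size_map. Qed.

Lemma nth_std x i : i < size x ->
  nth 0 (std x) i = (count (fun y => y < nth 0 x i) x).+1.
Proof. by move=> Hi; rewrite /std (nth_map 0). Qed.

Lemma std_order_iso x : order_iso (std x) x.
Proof.
split=> [|i j]; first exact: size_std.
rewrite size_std => Hi Hj.
by rewrite !nth_std // ltnS count_lt_rank //; apply: mem_nth.
Qed.

Lemma order_iso_std x y : order_iso x y -> std x = std y.
Proof.
move=> [E H]; apply: (@eq_from_nth _ 0) => [|i]; first by rewrite !size_std.
rewrite size_std => Hi; rewrite !nth_std -?E //; congr _.+1.
have Idx (P : pred nat) z :
    count P z = count (fun j => P (nth 0 z j)) (iota 0 (size z)).
  by rewrite -{1}(mkseq_nth 0 z) /mkseq count_map.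
rewrite (Idx _ x) (Idx _ y) -E.
by apply: eq_in_count => j; rewrite mem_iota /= => Hj; apply: H; lia.
Qed.

Lemma std_order_iso_eq x y : std x = std y -> order_iso x y.
Proof.
move=> E; apply: order_iso_trans (order_iso_sym (std_order_iso x)) _.
by rewrite E; apply: std_order_iso.
Qed.

Lemma std_perm x : uniq x -> is_perm (std x).
Proof.
move=> Ux.
have Us : uniq (std x).
  rewrite /std map_inj_in_uniq // => a b Ha Hb [] E.
  case: (ltngtP a b) => H //.
  - by have := @count_lt_rank x a b Ha; rewrite H E ltnn.
  - by have := @count_lt_rank x b a Hb; rewrite H E ltnn.
have Sub : {subset std x <= iota 1 (size x)}.
  move=> z /mapP [a Ha ->]; rewrite mem_iota.
  have := @count_lt_rank x a a.+1 Ha; rewrite ltnSn => H.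
  by rewrite add1n ltnS; apply/andP; split=> //; apply: leq_trans H (count_size _ _).
have [_ Eq] := uniq_min_size Us Sub ltac:(by rewrite size_iota size_std).
by rewrite /is_perm size_std; apply: uniq_perm => //; apply: iota_uniq.
Qed.

Lemma is_perm_props s : is_perm s ->
  uniq s /\ (forall x, (x \in s) = (1 <= x <= size s)).
Proof.
rewrite /is_perm => P; split; first by rewrite (perm_uniq P) iota_uniq.
by move=> x; rewrite (perm_mem P) mem_iota; lia.
Qed.

Lemma bigmax_attained (I : eqType) (r : seq I) (P : pred I) (F : I -> nat) :
  0 < \max_(i <- r | P i) F i ->
  exists2 i, (i \in r) && P i & F i = \max_(j <- r | P j) F j.
Proof.
elim: r => [|x r IH]; first by rewrite big_nil.
rewrite big_cons; case: ifP => Px; last first.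
  by move=> /IH [i /andP[Hi Pi] E]; exists i; rewrite ?in_cons ?Hi ?Pi ?orbT.
case: (leqP (\max_(i <- r | P i) F i) (F x)) => H _.
  by exists x; rewrite ?in_cons ?eqxx ?Px //; lia.
have [|i /andP[Hi Pi] E] := IH; first lia.
by exists i; rewrite ?in_cons ?Hi ?Pi ?orbT //; rewrite E; lia.
Qed.

Fixpoint colour_prefix (s : seq nat) (n : nat) : seq nat :=
  if n is n'.+1 then
    rcons (colour_prefix s n')
      (\max_(j <- iota 0 n' | nth 0 s n' < nth 0 s j)
          nth 0 (colour_prefix s n') j).+1
  else [::].

Definition colour (s : seq nat) (i : nat) : nat := nth 0 (colour_prefix s i.+1) i.

Lemma size_colour_prefix s n : size (colour_prefix s n) = n.
Proof. by elim: n => //= n IH; rewrite size_rcons IH. Qed.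

Lemma nth_colour_prefix s n i : i < n -> nth 0 (colour_prefix s n) i = colour s i.
Proof.
elim: n => // n IH; rewrite ltnS leq_eqVlt => /orP[/eqP->|H] //.
by rewrite /= nth_rcons size_colour_prefix H IH.
Qed.

Lemma colour_max s i :
  colour s i = (\max_(j <- iota 0 i | nth 0 s i < nth 0 s j) colour s j).+1.
Proof.
rewrite {1}/colour /= nth_rcons size_colour_prefix ltnn eqxx.
apply/eqP; rewrite eqSS; apply/eqP.
rewrite big_seq_cond [RHS]big_seq_cond; apply: eq_bigr => j /andP[].
by rewrite mem_iota => Hj _; apply: nth_colour_prefix; lia.
Qed.

Lemma colour_pos s i : 0 < colour s i.
Proof. by rewrite colour_max. Qed.

Lemma colour_lt_later s i j : j < i -> nth 0 s i < nth 0 s j ->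
  colour s j < colour s i.
Proof.
move=> Hji Hs; rewrite [colour s i]colour_max ltnS.
by apply: (leq_bigmax_seq (F := colour s)); rewrite ?mem_iota.
Qed.

Lemma colour_order_iso s t i :
  (forall a b, a <= i -> b <= i ->
     (nth 0 s a < nth 0 s b) = (nth 0 t a < nth 0 t b)) ->
  colour s i = colour t i.
Proof.
elim/ltn_ind: i => i IH H; rewrite !colour_max.
apply/eqP; rewrite eqSS; apply/eqP.
rewrite big_seq_cond [RHS]big_seq_cond; apply: eq_big => j.
  by case Hj: (j \in iota 0 i) => //=; move: Hj; rewrite mem_iota => Hj; apply: H; lia.
rewrite mem_iota => /andP[Hj _].
by apply: IH => [|a b Ha Hb]; [lia | apply: H; lia].
Qed.

Definition down_closed (l : seq nat) : Prop :=
  forall x, x \in l -> 0 < x /\ forall y, 0 < y < x -> y \in l.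

Lemma down_closed_mem l y : down_closed l -> 0 < y <= \max_(x <- l) x -> y \in l.
Proof.
move=> D /andP[y0 ym].
have [x /andP[Hx _] Ex] := @bigmax_attained _ l predT id (leq_trans y0 ym).
rewrite -Ex /= in ym; case: (ltngtP y x) => H; try lia; last by rewrite H.
by case: (D x Hx) => _ ->; rewrite ?y0.
Qed.

Lemma mex1_down_closed l : down_closed l -> mex1 l = (\max_(x <- l) x).+1.
Proof.
move=> D; set M := \max_(x <- l) x.
have In y : 0 < y <= M -> y \in l by apply: down_closed_mem.
have ML : M <= size l.
  have := @uniq_leq_size _ (iota 1 M) l (iota_uniq 1 M).
  by rewrite size_iota; apply=> y; rewrite mem_iota => Hy; apply: In; lia.
have NM : M.+1 \notin l.
  by apply/negP => /(@leq_bigmax_seq _ l predT id) /(_ isT); rewrite -/M; lia.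
rewrite /mex1 (_ : (size l).+1 = M + (size l - M).+1); last lia.
rewrite iotaD filter_cat.
have -> : [seq c <- iota 1 M | c \notin l] = [::].
  rewrite (@eq_in_filter _ _ pred0) ?filter_pred0 // => y.
  by rewrite mem_iota /= => Hy; rewrite In //; lia.
by rewrite /= add1n NM.
Qed.

(* The colours of the earlier, larger entries form a down-closed list, so the
   greedy rule "smallest colour not yet used" gives [colour]. *)
Lemma colour_down_closed s i :
  down_closed [seq colour s j | j <- iota 0 i & nth 0 s i < nth 0 s j].
Proof.
elim/ltn_ind: i => i IH x /mapP [j].
rewrite mem_filter mem_iota => /andP[Hij Hj] ->.
split=> [|y Hy]; first exact: colour_pos.
have Dj := IH j ltac:(lia).
have : y \in [seq colour s j' | j' <- iota 0 j & nth 0 s j < nth 0 s j'].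
  apply: down_closed_mem => //; rewrite big_map big_filter.
  by move: Hy; rewrite {1}colour_max; lia.
case/mapP => j'; rewrite mem_filter mem_iota => /andP[Hj' Hj'r] ->.
by apply: map_f; rewrite mem_filter mem_iota; apply/andP; split; lia.
Qed.

Lemma colour_mex1 s i :
  colour s i = mex1 [seq colour s j | j <- iota 0 i & nth 0 s i < nth 0 s j].
Proof.
by rewrite mex1_down_closed ?big_map ?big_filter -?colour_max //;
  apply: colour_down_closed.
Qed.

(* The state of the RITMO algorithm once all values above v are coloured. *)
Definition partial_ritmo (s : seq nat) (v : nat) : seq nat :=
  [seq if v < nth 0 s j then colour s j else 0 | j <- iota 0 (size s)].

Lemma ritmo_step_partial s v : is_perm s -> v < size s ->
  ritmo_step s (partial_ritmo s v.+1) v.+1 = partial_ritmo s v.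
Proof.
move=> /is_perm_props [U M] Hv.
have Hin : v.+1 \in s by rewrite M; lia.
set i := index v.+1 s.
have Hi : i < size s by rewrite index_mem.
have Hsi : nth 0 s i = v.+1 by rewrite nth_index.
have Used : [seq c <- take i (partial_ritmo s v.+1) | 0 < c] =
            [seq colour s j | j <- iota 0 i & nth 0 s i < nth 0 s j].
  rewrite /partial_ritmo -map_take take_iota filter_map Hsi.
  rewrite (_ : minn i (size s) = i); last lia.
  rewrite (@eq_filter _ _ (fun j => v.+1 < nth 0 s j)); last first.
    by move=> j /=; case: ifP; rewrite ?colour_pos.
  by apply/eq_in_map => j; rewrite mem_filter => /andP[-> _].
rewrite /ritmo_step -/i Used -colour_mex1.
apply: (@eq_from_nth _ 0) => [|j].
  by rewrite size_set_nth /partial_ritmo !size_map size_iota; lia.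
rewrite size_set_nth /partial_ritmo size_map size_iota => Hj.
have Hj' : j < size s by lia.
rewrite nth_set_nth /= !(nth_map 0) ?size_iota // nth_iota // add0n.
case: eqP => [->|Hne]; first by rewrite Hsi ltnSn.
have Hne' : nth 0 s j != v.+1.
  by apply/eqP => E; apply: Hne; rewrite /i -E index_uniq.
by rewrite ltn_neqAle eq_sym Hne'.
Qed.

Lemma ritmo_colour s : is_perm s -> ritmo s = mkseq (colour s) (size s).
Proof.
move=> P; have [U M] := is_perm_props P.
have Hval j : j < size s -> 1 <= nth 0 s j <= size s.
  by move=> Hj; rewrite -M; apply: mem_nth.
have Start : partial_ritmo s (size s) = nseq (size s) 0.
  apply: (@eq_from_nth _ 0) => [|j]; first by rewrite size_map size_iota size_nseq.
  rewrite size_map size_iota => Hj.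
  rewrite (nth_map 0) ?size_iota // nth_iota // add0n nth_nseq Hj.
  by have := Hval j Hj; case: ifP => // Hlt Hb; lia.
have Finish : partial_ritmo s 0 = mkseq (colour s) (size s).
  apply/eq_in_map => j; rewrite mem_iota => Hj.
  by have := Hval j ltac:(lia); case: ifP => // Hlt Hb; lia.
have Run v : v <= size s ->
    foldl (ritmo_step s) (partial_ritmo s v) (rev (iota 1 v)) = partial_ritmo s 0.
  elim: v => // v IH Hv.
  by rewrite -addn1 iotaD rev_cat /= addn1 ritmo_step_partial // IH //; lia.
by rewrite /ritmo -Start Run // Finish.
Qed.

Lemma nth_decr n a : a < n -> nth 0 (decr n) a = n - a.
Proof. by move=> Ha; rewrite /decr nth_rev size_iota // nth_iota; lia. Qed.

Lemma std_decr n : std (decr n) = decr n.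
Proof.
have Below x m : count (fun y => y < x) (iota 1 m) = minn m x.-1.
  elim: m => [|m IH]; first by rewrite min0n.
  rewrite -[m.+1]addn1 iotaD count_cat IH /= add1n.
  by case: (ltnP m.+1 x) => H /=; lia.
apply: (@eq_from_nth _ 0) => [|a]; first by rewrite size_std.
rewrite size_std /decr size_rev size_iota => Ha.
rewrite nth_std ?size_rev ?size_iota // -/(decr n) nth_decr //.
by rewrite /decr count_rev Below; lia.
Qed.

(* An entry of colour larger than d ends a strictly decreasing subsequence of
   length d+1 of the prefix up to it: follow earlier, larger entries of
   colour one less. *)
Lemma decreasing_chain s d i : i < size s -> d < colour s i ->
  exists2 E : seq nat, size E = d &
    sorted (fun a b => b < a) (rcons E (nth 0 s i)) /\
    subseq (rcons E (nth 0 s i)) (take i.+1 s).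
Proof.
elim: d i => [|d IH] i Hi Hd.
  exists [::] => //; split=> //.
  by rewrite (take_nth 0 Hi) -!cats1 -[X in subseq X _]cat0s subseq_cat2r sub0seq.
move: Hd; rewrite colour_max ltnS => Hd.
have [j /andP[Hj Hsj] Ej] := bigmax_attained (leq_trans (ltn0Sn d) Hd).
move: Hj; rewrite mem_iota add0n => /andP[_ Hji].
have [E Esize [Esorted Esub]] := IH j ltac:(lia) ltac:(by rewrite Ej).
exists (rcons E (nth 0 s j)); first by rewrite size_rcons Esize.
split.
  case: E {Esize Esub} Esorted => [|h E] /=; first by rewrite Hsj.
  by rewrite !rcons_path last_rcons => -> /=.
rewrite (take_nth 0 Hi) -(cats1 _ (nth 0 s i)) -(cats1 (take i s)) subseq_cat2r.
apply: (subseq_trans Esub).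
by rewrite -(take_takel (i := j.+1) (j := i)) //; apply: take_subseq.
Qed.

Lemma colour_le_of_avoids n s i : avoids n s -> 1 <= n -> i < size s ->
  colour s i <= n.-1.
Proof.
move=> Av n1 Hi; rewrite leqNgt; apply/negP => Hc.
have [E Esize [Esorted Esub]] := @decreasing_chain s n.-1 i Hi Hc.
have /subseqP [I _ EI] : subseq (rcons E (nth 0 s i)) s.
  by apply: (subseq_trans Esub); apply: take_subseq.
have Decr := sorted_ltn_nth (fun _ _ _ Hxy Hyz => ltn_trans Hyz Hxy) 0 Esorted.
apply: (Av I); rewrite /pat -EI -std_decr; apply: order_iso_std.
split=> [|a b]; first by rewrite size_rcons Esize /decr size_rev size_iota; lia.
rewrite size_rcons Esize => Ha Hb; rewrite !nth_decr; try lia.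
case: (ltngtP a b) => Hab.
- by have := Decr a b; rewrite !inE size_rcons Esize => /(_ Ha Hb Hab); lia.
- by have := Decr b a; rewrite !inE size_rcons Esize => /(_ Hb Ha Hab); lia.
- by rewrite Hab; lia.
Qed.

Definition colour_above (s : seq nat) (v : nat) : nat :=
  \max_(j <- iota 0 (size s) | v <= nth 0 s j) colour s j.

Lemma colour_le_above s v j : j < size s -> v <= nth 0 s j ->
  colour s j <= colour_above s v.
Proof.
by move=> Hj Hv; apply: (leq_bigmax_seq (F := colour s)); rewrite ?mem_iota.
Qed.

Lemma colour_above_le s v c :
  (forall j, j < size s -> v <= nth 0 s j -> colour s j <= c) -> colour_above s v <= c.
Proof. by move=> H; apply/bigmax_leqP_seq => j; rewrite mem_iota; apply: H. Qed.

Lemma colour_le_above_succ s j : j < size s ->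
  colour s j <= (colour_above s (nth 0 s j).+1).+1.
Proof.
move=> Hj; rewrite colour_max ltnS; apply/bigmax_leqP_seq => j'.
by rewrite mem_iota => Hj' Hlt; apply: colour_le_above; lia.
Qed.

Lemma colour_above_succ s v :
  colour_above s v.+1 <= colour_above s v <= (colour_above s v.+1).+1.
Proof.
apply/andP; split; apply: colour_above_le => j Hj Hv.
  by apply: colour_le_above; lia.
case: (ltnP v (nth 0 s j)) => Hlt; first by have := colour_le_above Hj Hlt; lia.
by rewrite (_ : v = nth 0 s j); [apply: colour_le_above_succ | lia].
Qed.

(* The last k-1 entries of s (positions o+i,
   i < w) are order-isomorphic to, and coloured like, the k-1 entries of t
   preceding its last entry y. *)
Section Threshold.

Variables (s t : seq nat) (o q w c : nat).
Hypothesis perm_s : is_perm s.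
Hypothesis uniq_t : uniq t.
Hypothesis size_s : size s = o + w.
Hypothesis size_t : size t = (q + w).+1.
Hypothesis window_order : order_iso (drop o s) (take w (drop q t)).
Hypothesis window_colour : forall i, i < w -> colour t (q + i) = colour s (o + i).
Hypothesis colour_s_reaches : exists2 j, j < size s & colour s j = c.
Hypothesis colour_t_bounded : forall j, j < size t -> colour t j <= c.

Local Notation y := (nth 0 t (q + w)).
Local Notation W i := (nth 0 s (o + i)).
Local Notation Wt i := (nth 0 t (q + i)).

Lemma values_s j : j < size s -> 1 <= nth 0 s j <= size s.
Proof. by move=> Hj; have [_ <-] := is_perm_props perm_s; apply: mem_nth. Qed.

Lemma window_cmp i j : i < w -> j < w -> (W i < W j) = (Wt i < Wt j).
Proof.
move=> Hi Hj; have [_ H] := window_order.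
have Hsize : size (drop o s) = w by rewrite size_drop size_s; lia.
by rewrite -!nth_drop H ?Hsize // !nth_take // !nth_drop.
Qed.

Lemma window_neq_last i : i < w -> Wt i != y.
Proof. by move=> Hi; rewrite nth_uniq ?size_t //; lia. Qed.

Definition below : nat := \max_(i <- iota 0 w | Wt i < y) W i.

Lemma le_below i : i < w -> Wt i < y -> W i <= below.
Proof.
by move=> Hi Hy; apply: (leq_bigmax_seq (F := fun i => W i)); rewrite ?mem_iota.
Qed.

Lemma below_lt i : i < w -> y < Wt i -> below < W i.
Proof.
move=> Hi Hy.
have /andP[HWi _] := values_s (j := o + i) ltac:(rewrite size_s; lia).
suff : below <= (W i).-1 by lia.
apply/bigmax_leqP_seq => j; rewrite mem_iota => Hj Hjy.
have Hjw : j < w by lia.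
suff : W j < W i by lia.
by rewrite window_cmp //; apply: ltn_trans Hjy Hy.
Qed.

Lemma colour_window_above i : i < w -> y < Wt i -> colour s (o + i) < colour t (q + w).
Proof.
by move=> Hi Hy; rewrite -window_colour //; apply: colour_lt_later => //; lia.
Qed.

Lemma colour_above_window i : i < w -> y < Wt i ->
  (colour_above s (W i)).+1 <= colour t (q + w).
Proof.
move=> Hi Hy; rewrite -(prednK (colour_pos t (q + w))) ltnS.
apply: colour_above_le => j Hj Hv; rewrite -ltnS prednK ?colour_pos //.
case: (leqP o j) => Hoj.
  have [i' Hi' Ej] : exists2 i', i' < w & j = o + i' by exists (j - o); lia.
  subst j; apply: colour_window_above => //.
  move: Hv; rewrite leqNgt window_cmp // ltnNge negbK => Hle.
  exact: leq_trans Hy Hle.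
have Hne : nth 0 s j != W i.
  have [Us _] := is_perm_props perm_s; rewrite nth_uniq ?size_s //; lia.
apply: leq_ltn_trans (colour_window_above Hi Hy).
by apply: ltnW; apply: colour_lt_later; [lia | rewrite ltn_neqAle eq_sym Hne Hv].
Qed.

(* Threshold just above [below]: the earlier entries of t larger than y have
   colours reached by entries of s above the threshold. *)
Lemma colour_last_le : colour t (q + w) <= (colour_above s below.+1).+1.
Proof.
rewrite colour_max ltnS; apply/bigmax_leqP_seq => j; rewrite mem_iota => Hj Hy.
case: (leqP q j) => Hqj.
  have [i Hi Ej] : exists2 i, i < w & j = q + i by exists (j - q); lia.
  subst j; rewrite window_colour //.
  apply: colour_le_above; first by rewrite size_s; lia.
  exact: below_lt.
case: (posnP below) => [->|Hpos].
  apply: leq_trans (colour_t_bounded (j := j) _) _; first by rewrite size_t; lia.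
  have [j0 Hj0 <-] := colour_s_reaches.
  by apply: colour_le_above => //; have := values_s Hj0; lia.
have [i /andP[Hi Hiy] Ei] := bigmax_attained Hpos.
move: Hi; rewrite mem_iota => Hi.
have Hlt : colour t j < colour t (q + i) by apply: colour_lt_later; lia.
rewrite window_colour in Hlt; last lia.
have := @colour_le_above_succ s (o + i) ltac:(rewrite size_s; lia).
have -> : below = W i by rewrite Ei.
lia.
Qed.

(* The least v above [below] with 1 + colour_above s v <= colour(y) works: the
   bound is attained since [colour_above] moves by steps of one, and v cannot
   exceed a window value above y by minimality and [colour_above_window]. *)
Lemma threshold_exists : exists iota, [/\ 0 < iota <= (size s).+1,
  forall i, i < w -> (W i < iota) = (Wt i < y) &
  (colour_above s iota).+1 = colour t (q + w)].
Proof.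
pose P v := (below < v) && ((colour_above s v).+1 <= colour t (q + w)).
have Ptop : P (size s).+1.
  apply/andP; split.
    apply/bigmax_leqP_seq => i; rewrite mem_iota => Hi _.
    by have := values_s (j := o + i); lia.
  suff -> : colour_above s (size s).+1 = 0 by apply: colour_pos.
  by apply/eqP; rewrite -leqn0; apply: colour_above_le => j /values_s Hval Hv; lia.
have [v /andP[Hbv Hv] Hmin] := ex_minnP (ex_intro P _ Ptop).
exists v; split.
- by apply/andP; split; [lia | apply: Hmin].
- move=> i Hi; case: (ltngtP (Wt i) y) => Hy.
  + by have := le_below Hi Hy; lia.
  + apply/negbTE; rewrite -leqNgt; apply: Hmin.
    by rewrite /P below_lt // colour_above_window.
  + by move: (window_neq_last Hi); rewrite Hy eqxx.
- apply/eqP; rewrite eqn_leq Hv /=.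
  case: (ltnP below.+1 v) => Hv'; last first.
    by rewrite (_ : v = below.+1) ?colour_last_le //; lia.
  have Hprev : ~~ P v.-1 by apply/negP => /Hmin; lia.
  have := colour_above_succ s v.-1; rewrite prednK; last lia.
  by move: Hprev; rewrite /P (_ : below < v.-1) /=; lia.
Qed.

End Threshold.

Lemma nth_ritmo s i : is_perm s -> i < size s -> nth 0 (ritmo s) i = colour s i.
Proof. by move=> Ps Hi; rewrite ritmo_colour // nth_mkseq. Qed.

Lemma overlap_window s t k : 1 <= k <= size s -> k <= size t ->
  start_vertex k (en k (Sfun t)) = arrival_vertex k (en k (Sfun s)) ->
  order_iso (drop (size s - k.-1) s) (take k.-1 (drop (size t - k) t)) /\
  take k.-1 (drop (size t - k) (ritmo t)) = drop (size s - k.-1) (ritmo s).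
Proof.
move=> Hk Hkt; rewrite /start_vertex /arrival_vertex /be /en /Sfun /=.
rewrite size_std size_drop (_ : size s - (size s - k) - k.-1 = 1); last lia.
rewrite !drop_drop (_ : 1 + (size s - k) = size s - k.-1); last lia.
case=> /std_order_iso_eq Eorder Ecolour; split=> //.
have Hs : order_iso (drop 1 (std (drop (size s - k) s))) (drop (size s - k.-1) s).
  rewrite -(_ : 1 + (size s - k) = size s - k.-1); last lia.
  by rewrite -drop_drop; apply/order_iso_drop/std_order_iso.
have Ht := order_iso_take k.-1 (std_order_iso (drop (size t - k) t)).
exact: order_iso_trans (order_iso_sym Hs) (order_iso_trans (order_iso_sym Eorder) Ht).
Qed.

(* sigma^{*v} is the standardisation of sigma with all values doubled and
   2v-1 appended: this code places the new last value at v - 1/2. *)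
Definition star_code (s : seq nat) (v : nat) : seq nat :=
  rcons [seq 2 * x | x <- s] (2 * v).-1.

Lemma size_star s v : size (star s v) = (size s).+1.
Proof. by rewrite size_std size_rcons size_map. Qed.

Lemma star_perm s v : uniq s -> 0 < v -> is_perm (star s v).
Proof.
move=> Us Hv; apply: std_perm.
rewrite rcons_uniq map_inj_in_uniq ?Us ?andbT; last by move=> a b _ _; lia.
by apply/mapP => -[x _]; lia.
Qed.

Lemma star_cmp s v a b : a <= size s -> b <= size s ->
  (nth 0 (star s v) a < nth 0 (star s v) b) =
  (nth 0 (star_code s v) a < nth 0 (star_code s v) b).
Proof.
move=> Ha Hb; have [_ H] := std_order_iso (star_code s v).
by apply: H; rewrite size_std /star_code size_rcons size_map.
Qed.

Lemma nth_star_code s v a : a <= size s ->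
  nth 0 (star_code s v) a = if a < size s then 2 * nth 0 s a else (2 * v).-1.
Proof.
move=> Ha; rewrite nth_rcons size_map; case: ltnP => Hlt; first by rewrite (nth_map 0).
by rewrite (_ : a = size s) ?eqxx //; lia.
Qed.

Lemma colour_star_prefix s v i : i < size s -> colour (star s v) i = colour s i.
Proof.
move=> Hi; apply: colour_order_iso => a b Ha Hb.
have [Ha' Hb'] : a < size s /\ b < size s by lia.
by rewrite star_cmp ?nth_star_code ?Ha' ?Hb' ?ltn_mul2l //; lia.
Qed.

Lemma colour_star_last s v : 0 < v ->
  colour (star s v) (size s) = (colour_above s v).+1.
Proof.
move=> Hv; rewrite colour_max /colour_above; apply/eqP; rewrite eqSS; apply/eqP.
rewrite big_seq_cond [RHS]big_seq_cond; apply: eq_big => j.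
  case Hj: (j \in iota 0 (size s)) => //=; move: Hj; rewrite mem_iota => Hj.
  have Hj' : j < size s by lia.
  by rewrite star_cmp ?nth_star_code ?ltnn ?Hj'; lia.
by rewrite mem_iota => /andP[Hj _]; apply: colour_star_prefix; lia.
Qed.

Lemma star_suffix_order_iso s t o q w v :
  size s = o + w -> size t = (q + w).+1 -> uniq t -> 0 < v ->
  order_iso (drop o s) (take w (drop q t)) ->
  (forall i, i < w -> (nth 0 s (o + i) < v) = (nth 0 t (q + i) < nth 0 t (q + w))) ->
  order_iso (drop o (star s v)) (drop q t).
Proof.
move=> Hs Ht Ut Hv Hwin Hsep.
apply: order_iso_trans (order_iso_drop o (std_order_iso _)) _.
have Et : drop q t = rcons (take w (drop q t)) (nth 0 t (q + w)).
  by rewrite -nth_drop -take_nth ?take_oversize // size_drop Ht; lia.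
rewrite /star_code drop_rcons ?size_map ?Hs ?leq_addr // Et -map_drop.
apply: order_iso_rcons => [|i].
  exact: order_iso_trans (order_iso_double _) Hwin.
rewrite size_map size_drop Hs => Hi; have {}Hi : i < w by lia.
rewrite (nth_map 0) ?size_drop ?Hs; last lia.
rewrite nth_take // !nth_drop.
have Hne : nth 0 t (q + i) != nth 0 t (q + w) by rewrite nth_uniq ?Ht //; lia.
have Hsep' := Hsep i Hi.
case: (ltngtP (nth 0 t (q + i)) (nth 0 t (q + w))) Hne Hsep' => // Hc _ Hsep';
  split; apply/idP/idP; lia.
Qed.

Lemma star_suffix_colours s t o q w v :
  is_perm s -> is_perm t -> size s = o + w -> size t = (q + w).+1 -> 0 < v ->
  (forall i, i < w -> colour t (q + i) = colour s (o + i)) ->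
  (colour_above s v).+1 = colour t (q + w) ->
  drop o (ritmo (star s v)) = drop q (ritmo t).
Proof.
move=> Ps Pt Hs Ht Hv Hcol Hlast; have [Us _] := is_perm_props Ps.
rewrite !ritmo_colour ?star_perm // size_star.
apply: (@eq_from_nth _ 0) => [|i]; first by rewrite !size_drop !size_mkseq; lia.
rewrite size_drop size_mkseq => Hi; rewrite !nth_drop !nth_mkseq; try lia.
case: (ltnP i w) => Hiw; first by rewrite colour_star_prefix ?Hcol //; lia.
by rewrite (_ : i = w) -?Hs ?colour_star_last //; lia.
Qed.

Theorem mainTheorem12 (n k : nat) (sigma : seq nat) (pi' c' : seq nat) :
  2 <= n -> 1 <= k ->
  inAv n sigma -> k <= size sigma ->
  rainbow n (ritmo sigma) ->
  edge k n (pi', c') ->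
  start_vertex k (pi', c') = arrival_vertex k (en k (Sfun sigma)) ->
  exists iota, 1 <= iota <= (size sigma).+1 /\
    en k (Sfun (star sigma iota)) = (pi', c').
Proof.
move=> Hn Hk [Ps _ Avs] Hks Hrb [_ [t [[Pt _ Avt] Hkt Et]]] Hv; rewrite -Et in Hv *.
have Hks' : 1 <= k <= size sigma by rewrite Hk Hks.
have [Hwin Hcol] := overlap_window Hks' Hkt Hv.
set o := size sigma - k.-1 in Hwin Hcol; set q := size t - k in Hwin Hcol.
have Hso : size sigma = o + k.-1 by rewrite /o; lia.
have Hto : size t = (q + k.-1).+1 by rewrite /q; lia.
have [Ut _] := is_perm_props Pt.
have Hwcol i : i < k.-1 -> colour t (q + i) = colour sigma (o + i).
  move=> Hi; have := congr1 (nth 0 ^~ i) Hcol.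
  by rewrite /= nth_take // !nth_drop !nth_ritmo //; lia.
have Hreach : exists2 j, j < size sigma & colour sigma j = n.-1.
  have : n.-1 \in ritmo sigma by apply/Hrb; lia.
  by rewrite ritmo_colour // => /mapP [j]; rewrite mem_iota => Hj ->; exists j; lia.
have Hbound j : j < size t -> colour t j <= n.-1.
  by move=> Hj; apply: colour_le_of_avoids Avt _ Hj; lia.
have [v [Hv1 Hsep Hlast]] :=
  threshold_exists Ps Ut Hso Hto Hwin Hwcol Hreach Hbound.
exists v; split=> //.
rewrite /en /Sfun /= size_star (_ : (size sigma).+1 - k = o); last by rewrite /o; lia.
have Hv0 : 0 < v by lia.
congr pair.
  by apply/order_iso_std/(star_suffix_order_iso Hso Hto Ut Hv0 Hwin Hsep).
exact: (star_suffix_colours Ps Pt Hso Hto Hv0 Hwcol Hlast).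
Qed.
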